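(* Fix $g>0$, $p_0<p_1<0$, $\ell>0$ and $[\![\rho]\!]<0$. If $\Gamma_{\mathrm{rel}}>0$ satisfies $|p_1|=\Gamma_{\mathrm{rel}}\ell$, then there exists a one-parameter family $\{(H(\cdot;\lambda),Q(\lambda)):\lambda>0\}$ of solutions to the laminar flow problem with $H_p>0$, each of which has relative circulation $\Gamma_{\mathrm{rel}}$ on the lid (i.e. $H_p(0;\lambda)^{-1}=\Gamma_{\mathrm{rel}}$). Explicitly, $$H(p;\lambda)=\begin{cases}\dfrac{p}{\Gamma_{\mathrm{rel}}}+\ell+\dfrac{p_1-p_0}{\lambda}, & p_1<p<0,\\[2mm] \dfrac{p-p_0}{\lambda}, & p_0<p<p_1,\end{cases}\qquad Q(\lambda)=\frac{2g[\![\rho]\!](p_1-p_0)}{\lambda}+\Gamma_{\mathrm{rel}}^2-\lambda^2 .$$ In particular the depth of the fluid at parameter $\lambda$ is $d(\lambda)=H(p_1;\lambda)=\dfrac{p_1-p_0}{\lambda}$ and the width of the channel is $W(\lambda)=\ell+d(\lambda)$.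
   Context: Laminar flow problem: find $Q\in\mathbb R$ and $H\in C([p_0,0])$, of class $C^2$ on $[p_0,p_1]$ and on $[p_1,0]$ (one-sided derivatives at $p_1$), such that $H_{pp}=0$ on $(p_0,p_1)\cup(p_1,0)$; $[\![H_p^{-2}]\!]+2g[\![\rho]\!]H(p_1)-Q=0$; $H(0)=\ell+d(H)$ with $d(H)=H(p_1)$; $H(p_0)=0$. Here $[\![f]\!]=f(p_1^+)-f(p_1^-)$ (air value minus water value), $[\![\rho]\!]=\rho_{\mathrm{air}}-\rho_{\mathrm{water}}$, and $g$ is the gravitational constant. *)

From Stdlib Require Import Reals.
From Coquelicot Require Import Coquelicot.
Open Scope R_scope.

Definition Icc (a b : R) (x : R) : Prop := a <= x <= b.

Definition derive_within (a b : R) (f : R -> R) (x l : R) : Prop :=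
  filterlim (fun y => (f y - f x) / (y - x))
    (within (fun y => a <= y <= b /\ y <> x) (locally x)) (locally l).

Definition cont_within (a b : R) (f : R -> R) (x : R) : Prop :=
  filterlim f (within (fun y => a <= y <= b) (locally x)) (locally (f x)).

Definition C2_on (a b : R) (f f1 f2 : R -> R) : Prop :=
  (forall x, a <= x <= b -> derive_within a b f x (f1 x)) /\
  (forall x, a <= x <= b -> derive_within a b f1 x (f2 x)) /\
  (forall x, a <= x <= b -> cont_within a b f2 x).

(* (H,Q) solves the laminar flow problem; Hw1,Hw2 are H_p, H_pp on the water
   region [p0,p1], Ha1,Ha2 are H_p, H_pp on the air region [p1,0].
   jrho = [[rho]] = rho_air - rho_water.
   [[H_p^{-2}]] = H_p(p1^+)^{-2} - H_p(p1^-)^{-2}, d(H) = H(p1). *)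
Definition laminar_solution (g jrho p0 p1 ell : R) (H : R -> R) (Q : R)
  (Hw1 Hw2 Ha1 Ha2 : R -> R) : Prop :=
  (forall x, p0 <= x <= 0 -> cont_within p0 0 H x) /\
  C2_on p0 p1 H Hw1 Hw2 /\
  C2_on p1 0 H Ha1 Ha2 /\
  (forall p, p0 < p < p1 -> Hw2 p = 0) /\
  (forall p, p1 < p < 0 -> Ha2 p = 0) /\
  (/ (Ha1 p1 ^ 2) - / (Hw1 p1 ^ 2) + 2 * g * jrho * H p1 - Q = 0) /\
  H 0 = ell + H p1 /\
  H p0 = 0.

(** Every solution with [H_pp = 0] is piecewise affine with a kink at the interface [p1]:
    slope [1/lam] in the water and [1/Gam] in the air.  Writing the kink with [Rabs] makes
    continuity across [p1] automatic; [H(p0) = 0] fixes the water branch, the lid condition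
    [H(0) = ell + H(p1)] is exactly [|p1| = Gam ell], and the jump condition merely defines [Q]. *)

From Stdlib Require Import Reals Lra.
From Coquelicot Require Import Coquelicot.
Open Scope R_scope.

Lemma derive_within_affine (a b c d : R) (f : R -> R) (x : R) :
  (forall y, a <= y <= b -> f y = c * y + d) -> a <= x <= b ->
  derive_within a b f x c.
Proof.
  intros Hf Hx. unfold derive_within.
  apply filterlim_ext_loc with (fun _ => c).
  - unfold within. apply filter_forall. intros y [Hy Hne].
    rewrite (Hf y Hy), (Hf x Hx). field. lra.
  - apply filterlim_const.
Qed.

Lemma cont_within_continuity_pt (a b : R) (f : R -> R) (x : R) :
  continuity_pt f x -> cont_within a b f x.
Proof.
  intros Hfx. unfold cont_within.
  eapply filterlim_filter_le_1; [apply filter_le_within|].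
  now apply continuity_pt_filterlim.
Qed.

Lemma C2_on_affine (a b c d : R) (f : R -> R) :
  (forall y, a <= y <= b -> f y = c * y + d) ->
  C2_on a b f (fun _ => c) (fun _ => 0).
Proof.
  intros Hf. split; [|split].
  - intros x Hx. now apply derive_within_affine with d.
  - intros x Hx. apply derive_within_affine with c; auto. intros; ring.
  - intros x _. apply cont_within_continuity_pt, continuity_pt_const. now intros ? ?.
Qed.

(* Slope [s] on [(-oo, x1]] and [t] on [[x1, +oo)], vanishing at [x0]. *)
Definition kinked_line (x0 x1 s t x : R) : R :=
  s * (x - x0) + (t - s) * ((x - x1) + Rabs (x - x1)) / 2.

Lemma kinked_line_left (x0 x1 s t x : R) :
  x <= x1 -> kinked_line x0 x1 s t x = s * (x - x0).
Proof. intros Hx. unfold kinked_line. rewrite Rabs_left1 by lra. field. Qed.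

Lemma kinked_line_right (x0 x1 s t x : R) :
  x1 <= x -> kinked_line x0 x1 s t x = s * (x1 - x0) + t * (x - x1).
Proof. intros Hx. unfold kinked_line. rewrite Rabs_right by lra. field. Qed.

Lemma continuity_kinked_line (x0 x1 s t : R) : continuity (kinked_line x0 x1 s t).
Proof.
  assert (Hshift : forall c, continuity (fun x => x - c)).
  { intros c. apply continuity_minus; [apply derivable_continuous, derivable_id|].
    apply continuity_const. now intros ? ?. }
  assert (Hconst : forall c, continuity (fun _ : R => c)).
  { intros c. apply continuity_const. now intros ? ?. }
  unfold kinked_line. apply continuity_plus.
  - apply continuity_mult; auto.
  - unfold Rdiv. apply continuity_mult; auto.
    apply continuity_mult; auto.
    apply continuity_plus; auto.
    intros x. apply (continuity_pt_comp (fun x => x - x1) Rabs);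
      [apply Hshift | apply Rcontinuity_abs].
Qed.

Lemma laminar_solution_kinked_line (g jrho p0 p1 ell s t : R) :
  p0 < p1 -> p1 < 0 -> ell = t * - p1 ->
  laminar_solution g jrho p0 p1 ell (kinked_line p0 p1 s t)
    (/ t ^ 2 - / s ^ 2 + 2 * g * jrho * (s * (p1 - p0)))
    (fun _ => s) (fun _ => 0) (fun _ => t) (fun _ => 0).
Proof.
  intros H01 H1 Hell.
  assert (Hp1 : kinked_line p0 p1 s t p1 = s * (p1 - p0))
    by (apply kinked_line_left; lra).
  split; [|split; [|split; [|split; [|split; [|split; [|split]]]]]].
  - intros x _. apply cont_within_continuity_pt, continuity_kinked_line.
  - apply C2_on_affine with (- s * p0).
    intros y Hy. rewrite kinked_line_left by lra. ring.
  - apply C2_on_affine with (s * (p1 - p0) - t * p1).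
    intros y Hy. rewrite kinked_line_right by lra. ring.
  - reflexivity.
  - reflexivity.
  - rewrite Hp1. ring.
  - rewrite kinked_line_right, Hp1, Hell by lra. ring.
  - rewrite kinked_line_left by lra. ring.
Qed.

Theorem lemma3p2 :
  forall (g p0 p1 ell jrho Gam : R),
    0 < g -> p0 < p1 -> p1 < 0 -> 0 < ell -> jrho < 0 -> 0 < Gam ->
    Rabs p1 = Gam * ell ->
    exists (H : R -> R -> R) (Q : R -> R),
      forall lam : R, 0 < lam ->
        (exists Hw1 Hw2 Ha1 Ha2 : R -> R,
            laminar_solution g jrho p0 p1 ell (H lam) (Q lam) Hw1 Hw2 Ha1 Ha2 /\
            (forall p, p0 <= p <= p1 -> 0 < Hw1 p) /\
            (forall p, p1 <= p <= 0 -> 0 < Ha1 p) /\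
            / Ha1 0 = Gam) /\
        (forall p, p1 < p < 0 -> H lam p = p / Gam + ell + (p1 - p0) / lam) /\
        (forall p, p0 < p < p1 -> H lam p = (p - p0) / lam) /\
        Q lam = 2 * g * jrho * (p1 - p0) / lam + Gam ^ 2 - lam ^ 2 /\
        H lam p1 = (p1 - p0) / lam /\
        H lam 0 = ell + (p1 - p0) / lam.
Proof.
  intros g p0 p1 ell jrho Gam _ H01 H1 _ _ HGam Habs.
  rewrite Rabs_left in Habs by lra.
  assert (Hell : ell = / Gam * - p1) by (rewrite Habs; field; lra).
  exists (fun lam => kinked_line p0 p1 (/ lam) (/ Gam)).
  exists (fun lam => 2 * g * jrho * (p1 - p0) / lam + Gam ^ 2 - lam ^ 2).
  intros lam Hlam.
  assert (HQ : 2 * g * jrho * (p1 - p0) / lam + Gam ^ 2 - lam ^ 2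
               = / (/ Gam) ^ 2 - / (/ lam) ^ 2 + 2 * g * jrho * (/ lam * (p1 - p0)))
    by (field; lra).
  split; [|split; [|split; [|split]]].
  - exists (fun _ => / lam), (fun _ => 0), (fun _ => / Gam), (fun _ => 0).
    split; [|split; [|split]].
    + rewrite HQ. now apply laminar_solution_kinked_line.
    + intros. now apply Rinv_0_lt_compat.
    + intros. now apply Rinv_0_lt_compat.
    + apply Rinv_inv.
  - intros p Hp. rewrite kinked_line_right, Hell by lra. field. lra.
  - intros p Hp. rewrite kinked_line_left by lra. field. lra.
  - reflexivity.
  - split.
    + rewrite kinked_line_left by lra. field. lra.
    + rewrite kinked_line_right, Hell by lra. field. lra.
Qed.
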